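(* Let $p$ be a binary word with exactly one run. If $p=0$ or $p=1$, then $p$ has no internal zero at any $n\ge0$. If $p$ has length $l\ge2$, then $p$ has an internal zero at every $n\ge l+1$.
   Context: $c_p(w)$ is the number of occurrences of $p$ as a (not necessarily consecutive) subsequence of $w$; $B_{n,p}(k)$ is the number of binary words of length $n$ with $c_p(w)=k$. $p$ has an internal zero at $n$ if there exist $0\le k_1<k_2<k_3$ with $B_{n,p}(k_1)\ne0$, $B_{n,p}(k_2)=0$, $B_{n,p}(k_3)\ne0$. *)

From mathcomp Require Import all_boot.
Set Implicit Arguments. Unset Strict Implicit. Unset Printing Implicit Defensive.

(* Binary words are bit sequences (false = 0, true = 1). *)

(* c_p(w): number of occurrences of p as a (not necessarily consecutive)
   subsequence of w, i.e. the number of position sets (encoded as selection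
   masks m of length |w|) whose selected letters spell p. *)
Definition occ (p w : seq bool) : nat :=
  #|[set m : (size w).-tuple bool | mask m w == p]|.

Definition Bcount (n : nat) (p : seq bool) (k : nat) : nat :=
  #|[set w : n.-tuple bool | occ p w == k]|.

Definition internal_zero (p : seq bool) (n : nat) : Prop :=
  exists k1 k2 k3, [/\ k1 < k2, k2 < k3, Bcount n p k1 != 0,
                       Bcount n p k2 = 0 & Bcount n p k3 != 0].

Definition one_run (p : seq bool) : Prop :=
  exists (b : bool) (l : nat), 0 < l /\ p = nseq l b.

From mathcomp Require Import all_boot.
Set Implicit Arguments. Unset Strict Implicit. Unset Printing Implicit Defensive.

(* The number of occurrences of the one-run pattern b^l in a
   word w depends only on the number j of letters b in w: it is 'C(j, l),
   one occurrence per choice of l of those letters.  Since every j <= n is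
   the number of b's of some word of length n, the set of values k with
   B_{n,b^l}(k) <> 0 is exactly { 'C(j, l) | j <= n }.
   - For l = 1 this set is the interval [0, n]: no internal zero.
   - For l >= 2 and n >= l + 1 it contains 0 = 'C(0, l) and
     l + 1 = 'C(l + 1, l), but never 2, since 'C(j, l) jumps from 1
     (at j = l) to l + 1 >= 3: an internal zero at k = 2.
   The file first derives the first-letter recurrence for occ (from a
   splitting of the masks of x :: w by their first bit), then the binomial
   formula for b^l, then the characterisation of the support of Bcount,
   and finally the theorem. *)

Lemma card_tuple_cons n (P : pred (seq bool)) :
  #|[set m : n.+1.-tuple bool | P m]| =
  #|[set t : n.-tuple bool | P (true :: t)]| +
  #|[set t : n.-tuple bool | P (false :: t)]|.
Proof.
have card_head b : #|[set t : n.-tuple bool | P (b :: t)]| =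
    #|[set m : n.+1.-tuple bool | P m & thead m == b]|.
  have cons_inj : injective (fun t : n.-tuple bool => [tuple of b :: t]).
    by move=> t1 t2 /(congr1 val) [] /val_inj.
  rewrite -(card_imset _ cons_inj); apply: eq_card => m.
  case/tupleP: m => x t; rewrite !inE theadE; apply/imsetP/andP.
  - case=> t'; rewrite inE => Pt' /(congr1 val) [eq_xb /val_inj eq_tt'].
    by subst x t.
  - by case=> Pxt /eqP eq_xb; subst x; exists t; rewrite ?inE //; apply: val_inj.
rewrite !card_head -(cardsID [set m : n.+1.-tuple bool | thead m]).
by congr (_ + _); apply: eq_card => m; rewrite !inE; case: (thead m); rewrite ?andbT ?andbF.
Qed.

Lemma occ_nil p : occ p [::] = (p == [::]).
Proof.
rewrite /occ; case: p => [|y p] /=.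
  by rewrite (eq_card (B := predT)) ?card_tuple // => m; rewrite inE mask0.
by apply/eqP; rewrite cards_eq0; apply/eqP/setP => m; rewrite !inE mask0.
Qed.

(* First-letter recurrence: an occurrence of p in x :: w either skips x, or
   uses x as the first letter of p (possible only when x is that letter). *)
Lemma occ_cons p x w :
  occ p (x :: w) = occ p w + (if p is y :: p' then (x == y) * occ p' w else 0).
Proof.
rewrite /occ (@card_tuple_cons (size w) (fun m => mask m (x :: w) == p)) addnC /=.
congr (_ + _); case: p => [|y p].
  by apply/eqP; rewrite cards_eq0; apply/eqP/setP => t; rewrite !inE.
case: eqP => [<-|ne_xy]; rewrite ?mul1n ?mul0n.
  by apply: eq_card => t; rewrite !inE eqseq_cons eqxx.
by apply/eqP; rewrite cards_eq0; apply/eqP/setP => t; rewrite !inE eqseq_cons;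
  case: eqP.
Qed.

Lemma occ_nilp w : occ [::] w = 1.
Proof. by elim: w => [|x w IHw]; rewrite ?occ_nil // occ_cons IHw. Qed.

(* Occurrences of the one-run pattern b^l: choose l of the b's of w. *)
Lemma occ_nseq b l w : occ (nseq l b) w = 'C(count_mem b w, l).
Proof.
elim: w l => [|x w IHw] [|l]; rewrite ?occ_nil ?occ_nilp ?bin0 //.
rewrite occ_cons /= -[b :: nseq l b]/(nseq l.+1 b) !IHw.
by case: (x == b); rewrite ?add1n ?binS ?mul1n ?mul0n ?addn0.
Qed.

Lemma Bcount_neq0P n p k :
  reflect (exists w : n.-tuple bool, occ p w = k) (Bcount n p k != 0).
Proof.
rewrite /Bcount -lt0n; apply: (iffP card_gt0P) => [[w]|[w occ_w]].
  by rewrite inE => /eqP; exists w.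
by exists w; rewrite inE occ_w.
Qed.

Lemma count_mem_tuple n b j :
  j <= n -> exists w : n.-tuple bool, count_mem b w = j.
Proof.
move=> le_jn.
have size_w : size (nseq j b ++ nseq (n - j) (~~ b)) == n.
  by rewrite size_cat !size_nseq subnKC.
exists (Tuple size_w); rewrite /= count_cat !count_nseq /= eqxx mul1n.
by case: b {size_w}; rewrite mul0n addn0.
Qed.

Lemma Bcount_nseq_neq0 n b l k :
  (Bcount n (nseq l b) k != 0) <-> exists2 j, j <= n & 'C(j, l) = k.
Proof.
split=> [/Bcount_neq0P [w occ_w]|[j le_jn <-]].
  exists (count_mem b w); last by rewrite -occ_nseq.
  by rewrite -{2}(size_tuple w) count_size.
have [w count_w] := count_mem_tuple b le_jn.
by apply/Bcount_neq0P; exists w; rewrite occ_nseq count_w.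
Qed.

(* For l >= 2 the binomial 'C(j, l) skips the value 2: it is 0 for j < l,
   1 for j = l, and at least 'C(l + 1, l) = l + 1 >= 3 for j > l. *)
Lemma bin_neq2 j l : 2 <= l -> 'C(j, l) != 2.
Proof.
move=> le2l; case: (ltngtP j l) => [lt_jl|lt_lj|->]; last by rewrite binn.
  by rewrite bin_small.
have := leq_bin2l l lt_lj; rewrite binSn.
by case: eqP => // ->; case: l le2l {lt_lj} => [|[|l]].
Qed.

Theorem mainTheorem13 (p : seq bool) :
  one_run p ->
  (size p = 1 -> forall n : nat, ~ internal_zero p n) /\
  (2 <= size p -> forall n : nat, size p + 1 <= n -> internal_zero p n).
Proof.
case=> b [l [_ ->]]; rewrite size_nseq; split.
- (* l = 1: the support {j | j <= n} is an interval, so k1 < k2 < k3 with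
     k3 in the support forces k2 into it as well. *)
  move=> -> n [k1 [k2 [k3 [_ lt_k2k3 _ /eqP B_k2 /Bcount_nseq_neq0 [j le_jn]]]]].
  rewrite bin1 => def_j; move: B_k2; apply/negP/Bcount_nseq_neq0.
  by exists k2; rewrite ?bin1 // (leq_trans (ltnW lt_k2k3)) // -def_j.
-
  move=> le2l n lt_ln; exists 0, 2, l.+1; split=> //.
  + by apply/Bcount_nseq_neq0; exists 0; rewrite // bin_small // ltnW.
  + by apply/eqP/negPn/negP => /Bcount_nseq_neq0 [j _ /eqP]; apply/negP/bin_neq2.
  + by apply/Bcount_nseq_neq0; exists l.+1; rewrite ?binSn // -addn1.
Qed.
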